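(* Let $T$ be a tree on $n>3$ vertices, and suppose $u$ and $v$ are two distinct leaves of $T$ adjacent to the same vertex. Then $$\mathrm{rank}(\mathrm{Max4PC}_T)=\mathrm{rank}(\mathrm{Max4PC}_{T-u})=\mathrm{rank}(\mathrm{Max4PC}_{T-v}).$$
   Context: For a tree $T$ with vertex set $V$, $|V|=n$, let $d_{x,y}$ denote the distance between vertices $x,y$ in $T$. $\mathrm{Max4PC}_T$ is the $\binom{n}{2}\times\binom{n}{2}$ matrix with rows and columns indexed by the $2$-element subsets of $V$, whose entry in row $\{w,x\}$ and column $\{y,z\}$ is $\max\{d_{w,x}+d_{y,z},\ d_{w,y}+d_{x,z},\ d_{w,z}+d_{x,y}\}$. $T-u$ denotes the tree obtained from $T$ by deleting the leaf $u$. A leaf is a vertex of degree $1$. *)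

From mathcomp Require Import all_boot all_order all_algebra.
Set Implicit Arguments. Unset Strict Implicit. Unset Printing Implicit Defensive.
Import GRing.Theory Num.Theory.

Section Trees.
Variables (V : finType) (e : rel V).

Definition simple_graph : Prop := symmetric e /\ irreflexive e.

(* a tree: simple, connected, with exactly |V| - 1 edges
   (ordered adjacent pairs counted twice) *)
Definition is_tree : Prop :=
  [/\ simple_graph,
      (forall x y : V, connect e x y) &
      #|[set p : V * V | e p.1 p.2]| = 2 * (#|V| - 1)]%N.

Definition leaf (x : V) : bool := #|[set y | e x y]| == 1%N.

Fixpoint ball (k : nat) (x : V) : {set V} :=
  match k with
  | 0 => [set x]
  | k'.+1 => ball k' x :|: [set y | [exists z in ball k' x, e z y]]
  end.

(* graph distance: least k with y in ball k x (correct for connected graphs) *)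
Definition dist (x y : V) : nat :=
  find (fun k => y \in ball k x) (iota 0 #|V|).

Definition pairs : {set {set V}} := [set A : {set V} | #|A| == 2%N].

Definition fst_el (A : {set V}) (d : V) : V := nth d (enum A) 0.
Definition snd_el (A : {set V}) (d : V) : V := nth d (enum A) 1.

Definition max4pc_entry (A B : {set V}) (d : V) : nat :=
  let w := fst_el A d in let x := snd_el A d in
  let y := fst_el B d in let z := snd_el B d in
  maxn (dist w x + dist y z) (maxn (dist w y + dist x z) (dist w z + dist x y)).

(* Max4PC_T as a rational matrix, rows/columns indexed by an enumeration of
   the 2-element subsets (rank is independent of the enumeration) *)
Definition max4pc_mx : 'M[rat]_(#|pairs|) :=
  \matrix_(i < #|pairs|, j < #|pairs|)
    (let A : {set V} := enum_val i in let B : {set V} := enum_val j in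
     match [pick x in A] with
     | Some d => ((max4pc_entry A B d)%:R)%R
     | None => 0%R
     end).

Definition max4pc_rank : nat := \rank max4pc_mx.

End Trees.

Definition del_vertex (V : finType) (e : rel V) (u : V)
  : rel {x : V | x != u} := fun a b => e (val a) (val b).
Arguments del_vertex [V] e u _ _.

From mathcomp Require Import all_boot all_order all_algebra.
From mathcomp Require Import zify.
Set Implicit Arguments. Unset Strict Implicit. Unset Printing Implicit Defensive.
Import GRing.Theory.

(* Deleting a leaf u of a tree preserves the distances between the remaining
   vertices, so Max4PC_{T-u} is the principal submatrix of the symmetric
   matrix Max4PC_T on the pairs avoiding u; the ranks agree as soon as every
   row {u,x} lies in the span of the rows avoiding u.  Write m(a,b,c,t) for
   the entry in row {a,b} and column {c,t}.  If u hangs at w then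
   m(u,x,c,t) = m(w,x,c,t) + 1 for x <> u and m(u,w,c,t) = d(w,c) + d(w,t) + 1,
   and likewise for the second leaf v hanging at w.  Hence row {u,w} equals
   row {v,w}, and for any y outside {u,v,w} (it exists since n > 3)
   row {u,x} = row {w,x} + row {v,y} - row {w,y}.  By symmetry the same
   holds with u and v exchanged. *)

Section Balls.
Variables (V : finType) (e : rel V).

Lemma ballS k x :
  ball e k.+1 x = ball e k x :|: [set y | [exists z in ball e k x, e z y]].
Proof. by []. Qed.

Lemma in_ball0 x y : (y \in ball e 0 x) = (y == x).
Proof. by rewrite inE. Qed.

Lemma ball_mono k j x : k <= j -> {subset ball e k x <= ball e j x}.
Proof.
move=> /subnKC <-; elim: (j - k) => [|m IH]; first by rewrite addn0.
by move=> y /IH; rewrite addnS ballS inE => ->.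
Qed.

Lemma ball_center k x : x \in ball e k x.
Proof. by apply: (ball_mono (leq0n k)); rewrite in_ball0. Qed.

Lemma ball_edge k x y z : y \in ball e k x -> e y z -> z \in ball e k.+1 x.
Proof.
move=> Hy Hyz; rewrite ballS !inE; apply/orP; right; apply/existsP.
by exists y; rewrite Hy.
Qed.

Lemma ballSP k x y : y \in ball e k.+1 x ->
  y \in ball e k x \/ exists2 z, z \in ball e k x & e z y.
Proof.
rewrite ballS !inE => /orP [->|/existsP [z /andP [Hz Hzy]]]; [by left|right].
by exists z.
Qed.

Lemma ball_trans a b x y z :
  y \in ball e a x -> z \in ball e b y -> z \in ball e (a + b) x.
Proof.
move=> Hy; elim: b z => [|b IH] z; first by rewrite in_ball0 addn0 => /eqP ->.
move=> /ballSP [/IH H|[t /IH Ht Htz]]; first by apply: (ball_mono _ H); lia.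
by rewrite addnS; apply: ball_edge Ht Htz.
Qed.

Lemma path_ball p x : path e x p -> last x p \in ball e (size p) x.
Proof.
elim: p x => [|y p IH] x /=; first by rewrite in_ball0.
move=> /andP [Hxy /IH Hp].
by have := ball_trans (ball_edge (ball_center 0 x) Hxy) Hp; rewrite add1n.
Qed.

Lemma ball_stable k x : ball e k x = ball e k.+1 x ->
  forall j, ball e (k + j) x = ball e k x.
Proof.
move=> Hk; elim=> [|j IH]; first by rewrite addn0.
by rewrite addnS ballS IH -ballS.
Qed.

Lemma ball_card_gt m x : (forall k, k < m -> ball e k x != ball e k.+1 x) ->
  m < #|ball e m x|.
Proof.
elim: m => [|m IH] Hgrow; first by rewrite cards1.
apply: (leq_ltn_trans (IH (fun k Hk => Hgrow k (ltnW Hk)))).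
apply: proper_card; rewrite properEneq Hgrow //=.
by apply/subsetP; apply: (ball_mono (leqnSn m)).
Qed.

(* Balls grow strictly until they stabilise, so radius #|V|.-1 is enough. *)
Lemma ball_saturated j x : {subset ball e j x <= ball e #|V|.-1 x}.
Proof.
case: (leqP j #|V|.-1) => Hj; first exact: (ball_mono Hj).
case: (boolP [exists k : 'I_#|V|, ball e k x == ball e k.+1 x]).
  move=> /existsP [k /eqP Hk] y.
  have Hkn : k <= #|V|.-1 by have := ltn_ord k; lia.
  rewrite -(subnKC (ltnW (leq_ltn_trans Hkn Hj))) (ball_stable Hk).
  exact: (ball_mono Hkn).
rewrite negb_exists => /forallP Hgrow.
have := max_card (mem (ball e #|V| x)); rewrite leqNgt ball_card_gt //.
by move=> k Hk; apply: (Hgrow (Ordinal Hk)).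
Qed.

Lemma dist_leq k x y : y \in ball e #|V|.-1 x ->
  (dist e x y <= k) = (y \in ball e k x).
Proof.
move=> Hy; rewrite /dist; set P := fun k => y \in ball e k x.
have Hn : 0 < #|V| by apply/card_gt0P; exists x.
have Hhas : has P (iota 0 #|V|).
  by apply/hasP; exists #|V|.-1; rewrite // mem_iota; lia.
have := has_find P (iota 0 #|V|); rewrite Hhas size_iota => Hfind.
have := nth_find 0 Hhas; rewrite nth_iota // add0n => HPfind.
apply/idP/idP => [H|Hk]; first exact: (ball_mono H HPfind).
rewrite leqNgt; apply/negP => Hlt.
have := before_find 0 Hlt; rewrite nth_iota; last by lia.
by rewrite add0n /P Hk.
Qed.

Hypothesis esym : symmetric e.

Lemma ball_sym k x y : y \in ball e k x -> x \in ball e k y.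
Proof.
elim: k x y => [|k IH] x y; first by rewrite !in_ball0 eq_sym.
move=> /ballSP [/IH H|[z /IH Hz Hzy]]; first exact: ball_mono H.
have Hyz : z \in ball e 1 y by apply: ball_edge (ball_center 0 y) _; rewrite esym.
by rewrite -add1n; apply: ball_trans Hyz Hz.
Qed.

End Balls.

Definition ball_connected (V : finType) (e : rel V) : Prop :=
  forall x y : V, y \in ball e #|V|.-1 x.

Lemma tree_ball_connected (V : finType) (e : rel V) :
  is_tree e -> ball_connected e.
Proof.
case=> _ Hconn _ x y; have /connectP [p Hp ->] := Hconn x y.
exact: ball_saturated (path_ball Hp).
Qed.

Section Distance.
Variables (V : finType) (e : rel V).
Hypotheses (esym : symmetric e) (Hconn : ball_connected e).

Lemma dist_ball x y : y \in ball e (dist e x y) x.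
Proof. by rewrite -dist_leq. Qed.

Lemma dist_xx x : dist e x x = 0.
Proof. by apply/eqP; rewrite -leqn0 dist_leq // in_ball0. Qed.

Lemma distC x y : dist e x y = dist e y x.
Proof.
by apply/eqP/eqn_leP => k; rewrite !dist_leq //; apply/idP/idP; apply: ball_sym.
Qed.

Lemma dist_triangle x y z : dist e x z <= dist e x y + dist e y z.
Proof. by rewrite dist_leq //; apply: ball_trans (dist_ball x y) (dist_ball y z). Qed.

Variables (p w : V).
Hypotheses (Hleaf : leaf e p) (Hpw : e p w).

Lemma leaf_adj y : e p y -> y = w.
Proof.
move: Hleaf => /cards1P [z Hz] Hpy.
have : w \in [set y | e p y] by rewrite inE.
have : y \in [set y | e p y] by rewrite inE.
by rewrite Hz !inE => /eqP -> /eqP ->.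
Qed.

Lemma ball_leafS k y : y \in ball e k.+1 p -> y = p \/ y \in ball e k w.
Proof.
elim: k y => [|k IH] y.
  move=> /ballSP [|[z]]; rewrite in_ball0; first by move/eqP; left.
  by move=> /eqP -> /leaf_adj ->; right; rewrite in_ball0.
move=> /ballSP [/IH [->|H]|[z /IH [->|Hz] Hzy]]; first by left.
- by right; apply: ball_mono H.
- by right; rewrite (leaf_adj Hzy) ball_center.
- by right; apply: ball_edge Hz Hzy.
Qed.

Lemma dist_leaf z : z != p -> dist e p z = (dist e w z).+1.
Proof.
move=> Hzp; have Hw1 : w \in ball e 1 p := ball_edge (ball_center e 0 p) Hpw.
case Hd: (dist e p z) => [|m].
  by move: Hd => /eqP; rewrite -leqn0 dist_leq // in_ball0 (negbTE Hzp).
congr S; apply/eqP/eqn_leP => k; rewrite -ltnS -Hd !dist_leq //; apply/idP/idP.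
  by move=> /ball_leafS [Hz|//]; rewrite Hz eqxx in Hzp.
by move=> Hz; rewrite -add1n; apply: ball_trans Hw1 Hz.
Qed.

End Distance.

Section DeleteLeaf.
Variables (V : finType) (e : rel V) (u w : V).
Hypotheses (esym : symmetric e) (Hleaf : leaf e u) (Huw : e u w).
Local Notation V' := {x : V | x != u}.
Local Notation e' := (del_vertex e u).

Lemma ball_del_vertex k (a b : V') :
  (b \in ball e' k a) = (val b \in ball e k (val a)).
Proof.
apply/idP/idP.
  elim: k b => [|k IH] b; first by rewrite !in_ball0 => /eqP ->.
  move=> /ballSP [/IH H|[z /IH Hz Hzb]]; first exact: ball_mono H.
  exact: ball_edge Hz Hzb.
elim/ltn_ind: k b => -[|k] IH b; first by rewrite !in_ball0 => /eqP /val_inj ->.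
move=> /ballSP [H|[z Hz Hzb]]; first by apply: (ball_mono (leqnSn k)); apply: IH.
case: (eqVneq z u) => [Hzu|Hzu]; last first.
  by apply: (@ball_edge _ _ _ _ (Sub z Hzu)) Hzb; apply: IH.
(* A walk from a through the leaf u to b passes b = w, the only neighbour of u, before u. *)
subst z; have Hbw : val b = w := leaf_adj Hleaf Huw Hzb.
have Hau : val a != u := valP a.
case: k IH Hz => [|k] IH Hz; first by move: Hz; rewrite in_ball0 eq_sym (negbTE Hau).
have [Hua|Hwa] := ball_leafS Hleaf Huw (ball_sym esym Hz).
  by rewrite Hua eqxx in Hau.
apply: (ball_mono (leqW (leqnSn k))); apply: IH; first by lia.
by rewrite Hbw; apply: ball_sym.
Qed.

Lemma ball_connected_del_leaf : ball_connected e -> ball_connected e'.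
Proof. by move=> Hconn a b; apply: ball_saturated; rewrite ball_del_vertex. Qed.

Lemma dist_del_leaf : ball_connected e ->
  forall a b : V', dist e' a b = dist e (val a) (val b).
Proof.
move=> Hconn a b; apply/eqP/eqn_leP => k.
by rewrite dist_leq ?ball_connected_del_leaf // dist_leq // ball_del_vertex.
Qed.

End DeleteLeaf.

Section FourPointMax.
Variables (V : finType) (d : V -> V -> nat).

Definition four_point_max x y z t : nat :=
  maxn (d x y + d z t) (maxn (d x z + d y t) (d x t + d y z)).

Hypothesis dC : forall x y, d x y = d y x.

Lemma four_point_maxC12 x y z t : four_point_max x y z t = four_point_max y x z t.
Proof. by rewrite /four_point_max (dC y x) (dC y z) (dC y t) (dC x z) (dC x t); lia. Qed.

Lemma four_point_maxC34 x y z t : four_point_max x y z t = four_point_max x y t z.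
Proof. by rewrite /four_point_max (dC t z); lia. Qed.

Lemma four_point_maxC x y z t : four_point_max x y z t = four_point_max z t x y.
Proof. by rewrite /four_point_max (dC z x) (dC t y) (dC z y) (dC t x); lia. Qed.

End FourPointMax.

Lemma pairsP (V : finType) (A : {set V}) :
  A \in pairs V -> exists a b, a != b /\ A = [set a; b].
Proof. by rewrite inE => /cards2P. Qed.

Lemma enum_set2 (V : finType) (a b : V) : a != b ->
  enum [set a; b] = [:: a; b] \/ enum [set a; b] = [:: b; a].
Proof.
move=> Hab; have := mem_enum (mem [set a; b]); have := enum_uniq (mem [set a; b]).
have : size (enum [set a; b]) = 2 by rewrite -cardE cards2 Hab.
case: (enum _) => [|x [|y []]] //= _; rewrite inE andbT => Hxy Hmem.
have := Hmem a; have := Hmem b; rewrite !inE !eqxx orbT /=.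
move=> /orP [] /eqP Hb /orP [] /eqP Ha; subst.
- by rewrite eqxx in Hab.
- by right.
- by left.
- by rewrite eqxx in Hab.
Qed.

Lemma pairs_imset (T U : finType) (f : T -> U) (A : {set T}) :
  injective f -> A \in pairs T -> f @: A \in pairs U.
Proof. by move=> Hf; rewrite !inE card_imset. Qed.

Section Max4PCMatrix.
Variables (V : finType) (e : rel V).
Hypothesis dC : forall x y : V, dist e x y = dist e y x.
Local Notation M := (max4pc_mx e).
Local Open Scope ring_scope.

Lemma max4pc_entry_pair a b c t d0 : a != b -> c != t ->
  max4pc_entry e [set a; b] [set c; t] d0 = four_point_max (dist e) a b c t.
Proof.
move=> Hab Hct; rewrite /max4pc_entry -/(four_point_max _ _ _ _ _) /fst_el /snd_el.
have C12 := four_point_maxC12 dC; have C34 := four_point_maxC34 dC.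
by case: (enum_set2 Hab) => ->; case: (enum_set2 Hct) => -> //=; rewrite C12 C34.
Qed.

Lemma max4pc_mxE i j a b c t :
  enum_val i = [set a; b] -> a != b -> enum_val j = [set c; t] -> c != t ->
  M i j = (four_point_max (dist e) a b c t)%:R.
Proof.
move=> Hi Hab Hj Hct; rewrite mxE /= Hi Hj.
case: pickP => [x _|Hnone]; first by rewrite max4pc_entry_pair.
by have := Hnone a; rewrite !inE eqxx.
Qed.

Lemma max4pc_mx_sym : M^T = M.
Proof.
apply/matrixP => i j; rewrite mxE.
have [a [b [Hab Hi]]] := pairsP (enum_valP i).
have [c [t [Hct Hj]]] := pairsP (enum_valP j).
by rewrite (max4pc_mxE Hj Hct Hi Hab) (max4pc_mxE Hi Hab Hj Hct) four_point_maxC.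
Qed.

End Max4PCMatrix.

Section LeafFourPoint.
Variables (V : finType) (e : rel V) (p w : V).
Hypotheses (esym : symmetric e) (Hirr : irreflexive e) (Hconn : ball_connected e).
Hypotheses (Hleaf : leaf e p) (Hpw : e p w).
Local Notation d := (dist e).
Local Notation m := (four_point_max (dist e)).

Let dC := distC esym Hconn.
Let d_leaf := dist_leaf Hconn Hleaf Hpw.

Lemma adj_neq : w != p.
Proof. by apply: contraTneq Hpw => ->; rewrite Hirr. Qed.

Lemma four_point_max_leaf x y z : x != p -> y != z -> m p x y z = (m w x y z).+1.
Proof.
move=> Hxp Hyz.
have leaf_last y' z' : z' != p -> m p x y' z' = (m w x y' z').+1.
  move=> Hzp; have [->|Hyp] := eqVneq y' p; last by rewrite /four_point_max !d_leaf //; lia.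
  have := dist_triangle Hconn x w z'.
  rewrite /four_point_max !(dist_xx Hconn) (dC w p) (dC x p) !d_leaf ?adj_neq //.
  rewrite !(dist_xx Hconn) (dC x w); lia.
have [Hzp|] := eqVneq z p; last exact: leaf_last.
rewrite (four_point_maxC34 dC) (four_point_maxC34 dC w) leaf_last //.
by rewrite -Hzp.
Qed.

Lemma four_point_max_leaf_adj y z : y != z -> m p w y z = (d w y + d w z).+1.
Proof.
have Hdpw : d p w = 1 by rewrite d_leaf ?adj_neq ?dist_xx.
move=> Hyz; have := dist_triangle Hconn y w z; rewrite (dC y w).
case: (eqVneq y p) Hyz => [-> Hpz|Hyp Hyz].
  rewrite /four_point_max (dist_xx Hconn) Hdpw (dC w p) Hdpw d_leaf; first lia.
  by rewrite eq_sym.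
have [->|Hzp] := eqVneq z p.
  by rewrite /four_point_max (dC y p) (dist_xx Hconn) Hdpw (dC w p) Hdpw !d_leaf //; lia.
by rewrite /four_point_max Hdpw !d_leaf //; lia.
Qed.

End LeafFourPoint.

Section PrincipalSubmatrix.
Local Open Scope ring_scope.
Variables (F : fieldType) (n m : nat) (A : 'M[F]_n) (f : 'I_m -> 'I_n).
Hypotheses (Asym : A^T = A) (A_rowsub : (A <= rowsub f A)%MS).

Let colsubE k (B : 'M[F]_(k, n)) : colsub f B = B *m colsub f 1%:M.
Proof. by rewrite mulmx_colsub mulmx1. Qed.

Lemma mxrank_sym_mxsub : \rank (mxsub f f A) = \rank A.
Proof.
apply/eqP; rewrite eqn_leq; apply/andP; split.
  by rewrite mxsubrc rowsubE (leq_trans (mxrankM_maxr _ _)) // colsubE mxrankM_maxl.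
apply: leq_trans (mxrankS A_rowsub) _.
rewrite -mxrank_tr trmx_mxsub Asym [mxsub f f A]mxsubcr (colsubE A) (colsubE (rowsub f A)).
exact/mxrankS/submxMr.
Qed.

End PrincipalSubmatrix.

Section TwinLeafRows.
Variables (V : finType) (e : rel V) (u v w : V).
Hypotheses (esym : symmetric e) (Hirr : irreflexive e) (Hconn : ball_connected e).
Hypotheses (Hleaf_u : leaf e u) (Hleaf_v : leaf e v) (Huw : e u w) (Hvw : e v w).
Local Notation M := (max4pc_mx e).
Local Open Scope ring_scope.

Let dC := distC esym Hconn.
Let Hwu : w != u := adj_neq Hirr Huw.
Let Hwv : w != v := adj_neq Hirr Hvw.

Lemma max4pc_row_twin_leaves i j :
  enum_val i = [set u; w] -> enum_val j = [set v; w] -> row i M = row j M.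
Proof.
move=> Hi Hj; apply/rowP => k; rewrite !(@mxE _ 1).
have [c [t [Hct Hk]]] := pairsP (enum_valP k).
rewrite (max4pc_mxE dC Hi _ Hk Hct) 1?eq_sym // (max4pc_mxE dC Hj _ Hk Hct) 1?eq_sym //.
by rewrite (four_point_max_leaf_adj esym Hirr Hconn Hleaf_u Huw Hct)
  (four_point_max_leaf_adj esym Hirr Hconn Hleaf_v Hvw Hct).
Qed.

Lemma max4pc_row_leaf i i' j j' x y :
  x != u -> x != w -> y != v -> y != w ->
  enum_val i = [set u; x] -> enum_val i' = [set w; x] ->
  enum_val j = [set v; y] -> enum_val j' = [set w; y] ->
  row i M = row i' M + (row j M - row j' M).
Proof.
move=> Hxu Hxw Hyv Hyw Hi Hi' Hj Hj'; apply/rowP => k; rewrite !(@mxE _ 1).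
have [c [t [Hct Hk]]] := pairsP (enum_valP k).
rewrite (max4pc_mxE dC Hi _ Hk Hct) 1?eq_sym // (max4pc_mxE dC Hi' _ Hk Hct) 1?eq_sym //.
rewrite (max4pc_mxE dC Hj _ Hk Hct) 1?eq_sym // (max4pc_mxE dC Hj' _ Hk Hct) 1?eq_sym //.
rewrite (four_point_max_leaf esym Hirr Hconn Hleaf_u Huw Hxu Hct).
rewrite (four_point_max_leaf esym Hirr Hconn Hleaf_v Hvw Hyv Hct).
by rewrite -!natr1 addrAC subrr add0r.
Qed.

End TwinLeafRows.

Lemma exists_notin_set3 (V : finType) (u v w : V) :
  3 < #|V| -> exists y, y \notin [set u; v; w].
Proof.
move=> Hcard; apply/existsP; rewrite -negb_forall; apply: contraL Hcard => /forallP Hall.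
have : [set: V] \subset [set u; v; w] by apply/subsetP => y _; move: (Hall y).
move=> /subset_leq_card; rewrite cardsT -leqNgt => /leq_trans; apply.
apply: (leq_trans (leq_card_setU _ _)); rewrite cards1 addn1 ltnS.
by apply: (leq_trans (leq_card_setU _ _)); rewrite !cards1.
Qed.

Definition pair_lift (V : finType) (u : V) (i : 'I_#|pairs {x : V | x != u}|) :
    'I_#|pairs V| :=
  enum_rank_in (pairs_imset val_inj (enum_valP i)) (val @: enum_val i).

Lemma enum_val_pair_lift (V : finType) (u : V) i :
  enum_val (pair_lift i) = val @: (enum_val i : {set {x : V | x != u}}).
Proof. by rewrite /pair_lift enum_rankK_in // (pairs_imset val_inj (enum_valP i)). Qed.

Lemma enum_val_pair_lift2 (V : finType) (u : V) i (a b : {x : V | x != u}) :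
  enum_val i = [set a; b] -> enum_val (pair_lift i) = [set val a; val b].
Proof. by move=> Hi; rewrite enum_val_pair_lift Hi imsetU1 imset_set1. Qed.

Section DeleteTwinLeaf.
Variables (V : finType) (e : rel V) (u v w : V).
Hypotheses (esym : symmetric e) (Hirr : irreflexive e) (Hconn : ball_connected e).
Hypotheses (Hcard : 3 < #|V|) (Huv : u != v).
Hypotheses (Hleaf_u : leaf e u) (Hleaf_v : leaf e v) (Huw : e u w) (Hvw : e v w).
Local Notation V' := {x : V | x != u}.
Local Notation e' := (del_vertex e u).
Local Notation M := (max4pc_mx e).
Local Notation lift := (@pair_lift V u).
Local Open Scope ring_scope.

Let dC := distC esym Hconn.
Let dist_del := dist_del_leaf esym Hleaf_u Huw Hconn.

Lemma max4pc_mx_del_leaf : mxsub lift lift M = max4pc_mx e'.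
Proof.
have dC' (a b : V') : dist e' a b = dist e' b a by rewrite !dist_del dC.
apply/matrixP => i j; rewrite mxE.
have [a [b [Hab Hi]]] := pairsP (enum_valP i).
have [c [t [Hct Hj]]] := pairsP (enum_valP j).
rewrite (max4pc_mxE dC (enum_val_pair_lift2 Hi) _ (enum_val_pair_lift2 Hj)) ?val_eqE //.
by rewrite (max4pc_mxE dC' Hi Hab Hj Hct) /four_point_max !dist_del.
Qed.

Lemma row_avoiding_leaf_sub (k : 'I_#|pairs V|) :
  u \notin enum_val k -> (row k M <= rowsub lift M)%MS.
Proof.
move=> Hu; have [a [b [Hab Hk]]] := pairsP (enum_valP k).
have Hau : a != u by apply: contraNneq Hu => <-; rewrite Hk !inE eqxx.
have Hbu : b != u by apply: contraNneq Hu => <-; rewrite Hk !inE eqxx orbT.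
pose a' : V' := Sub a Hau; pose b' : V' := Sub b Hbu.
have Hpair : [set a'; b'] \in pairs V' by rewrite inE cards2 -val_eqE /= Hab.
suff -> : k = lift (enum_rank_in Hpair [set a'; b']) by rewrite -row_rowsub row_sub.
by apply: enum_val_inj; rewrite (enum_val_pair_lift2 (enum_rankK_in _ _)) ?Hk.
Qed.

Lemma max4pc_rows_sub : (M <= rowsub lift M)%MS.
Proof.
apply/row_subP => k.
have [Hu|] := boolP (u \in enum_val k); last exact: row_avoiding_leaf_sub.
have [x Hxu Hk] : exists2 x, x != u & enum_val k = [set u; x].
  have [a [b [Hab Hk]]] := pairsP (enum_valP k).
  move: Hu; rewrite Hk !inE => /orP [] /eqP ->; first by exists b; rewrite // eq_sym.
  by exists a; rewrite // setUC.
pose ix a b := enum_rank_in (enum_valP k) [set a; b].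
have ixE a b : a != b -> enum_val (ix a b) = [set a; b].
  by move=> Hab; rewrite enum_rankK_in ?enum_valP // inE cards2 Hab.
have avoid a b : a != b -> a != u -> b != u -> (row (ix a b) M <= rowsub lift M)%MS.
  move=> Hab Hau Hbu; apply: row_avoiding_leaf_sub.
  by rewrite ixE // !inE negb_or !(eq_sym u) Hau Hbu.
have Hwu : w != u := adj_neq Hirr Huw.
have Hwv : w != v := adj_neq Hirr Hvw.
have Hvu : v != u by rewrite eq_sym.
have [Hxw|Hxw] := eqVneq x w.
  rewrite Hxw in Hk.
  rewrite (max4pc_row_twin_leaves esym Hirr Hconn Hleaf_u Hleaf_v Huw Hvw Hk (ixE v w _));
    last by rewrite eq_sym.
  by apply: avoid; rewrite // eq_sym.
have [y] := exists_notin_set3 u v w Hcard; rewrite !inE !negb_or => /andP [/andP [Hyu Hyv] Hyw].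
rewrite (max4pc_row_leaf esym Hirr Hconn Hleaf_u Hleaf_v Huw Hvw Hxu Hxw Hyv Hyw Hk
  (ixE w x _) (ixE v y _) (ixE w y _)) 1?eq_sym //.
by rewrite !(addmx_sub, eqmx_opp) // avoid // eq_sym.
Qed.

Lemma max4pc_rank_del_twin_leaf : max4pc_rank e' = max4pc_rank e.
Proof.
rewrite /max4pc_rank -max4pc_mx_del_leaf mxrank_sym_mxsub //.
  exact: max4pc_mx_sym.
exact: max4pc_rows_sub.
Qed.

End DeleteTwinLeaf.

Theorem mainTheorem5 (V : finType) (e : rel V) (u v : V) :
  is_tree e -> (3 < #|V|)%N -> u != v -> leaf e u -> leaf e v ->
  (exists w : V, e u w && e v w) ->
  max4pc_rank e = max4pc_rank (del_vertex e u) /\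
  max4pc_rank (del_vertex e u) = max4pc_rank (del_vertex e v).
Proof.
move=> Htree Hcard Huv Hleaf_u Hleaf_v [w /andP [Huw Hvw]].
have Hconn := tree_ball_connected Htree.
have [[esym Hirr] _ _] := Htree.
have Hvu : v != u by rewrite eq_sym.
rewrite (max4pc_rank_del_twin_leaf esym Hirr Hconn Hcard Huv Hleaf_u Hleaf_v Huw Hvw).
by rewrite (max4pc_rank_del_twin_leaf esym Hirr Hconn Hcard Hvu Hleaf_v Hleaf_u Hvw Huw).
Qed.
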